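(* Let $H=(U,(A_1,\dots,A_m))$ be a complete harmonic set system with $|U|<m(m-2)$ and $m\ge 51$, such that $H_I=\emptyset$ for every nonconsecutive $I\subseteq[m]$ of size $3$. Then $|U|$ is a nonnegative integer linear combination of $m$, $m+1$, $\binom m2$ and $\frac{(m+1)(m-2)}{2}$.
   Context: For $I\subseteq[m]$, $H_I=\bigcap_{i\in I}A_i$ ($=U$ if $I=\emptyset$). $H$ is complete if $\bigcup_{i=1}^m A_i=U$. The run decomposition of a finite set $I$ of positive integers is the partition of sizes, in nonincreasing order, of the maximal runs of consecutive integers in $I$. $H$ is harmonic if $|H_I|=|H_J|$ whenever $I,J\subseteq[m]$ have the same run decomposition. A set of integers is nonconsecutive if no two distinct elements differ by exactly $1$. *)

(* Indices [m] = {1..m} are represented by 'I_m = {0..m-1};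
   run decompositions and nonconsecutiveness are shift-invariant. *)
From mathcomp Require Import all_boot.
Set Implicit Arguments. Unset Strict Implicit. Unset Printing Implicit Defensive.

Section SetSystems.
Variables (U : finType) (m : nat) (A : 'I_m -> {set U}).

Definition HI (I : {set 'I_m}) : {set U} := \bigcap_(i in I) A i.

Definition complete : Prop := \bigcup_(i < m) A i = [set: U].

Definition natset (I : {set 'I_m}) : seq nat := [seq val i | i <- enum I].

Definition run_start (S : seq nat) (k : nat) : bool :=
  (k \in S) && ~~ ((0 < k) && (k.-1 \in S)).

Fixpoint run_len (S : seq nat) (k fuel : nat) : nat :=
  match fuel with
  | 0 => 0
  | f.+1 => if k \in S then (run_len S k.+1 f).+1 else 0
  end.

Definition run_decomp (I : {set 'I_m}) : seq nat :=
  let S := natset I in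
  sort geq [seq run_len S k m.+1 | k <- S & run_start S k].

Definition harmonic : Prop :=
  forall I J : {set 'I_m}, run_decomp I = run_decomp J -> #|HI I| = #|HI J|.

Definition nonconsecutive (I : {set 'I_m}) : Prop :=
  forall i j, i \in I -> j \in I -> val i <> (val j).+1.

End SetSystems.

From mathcomp Require Import all_boot all_algebra zify ring.

Set Implicit Arguments. Unset Strict Implicit. Unset Printing Implicit Defensive.

(* The trace {i | u \in A_i} of an element u is nonempty by
   completeness and never contains i < j < k with j >= i + 2 and k >= j + 2.
   Classify the elements by the least index t of their trace: those containing
   t but not least there are classified by the index j preceding t, and the
   number of u in which j < t are consecutive indices depends, by harmonicity,
   only on t - j (through the constants h_p, and it is the same number g4 for
   all t - j >= 4).  This writes #|U| in terms of the h_p.  Refining the count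
   of the traces with least index 5 by their next indices brings in the
   numbers s1, s2 of traces equal to {5} and {5, 6}, and one obtains, with
   q = h21 - 2 h22 >= 0,
     #|U| + (m+1) g4 = m s1 + (m+1) s2 + C(m,2) g4 + 2m q + (2m+1) h22,
     g4 <= s1 + s2 + q + h22.
   If g4 >= 2 this forces #|U| >= 2 (C(m,2) - 1) >= m (m - 2); if g4 <= 1 the
   identity itself is the required combination of m, m + 1, C(m,2) and
   (m+1)(m-2)/2 = C(m,2) - 1. *)

Section IndexLists.
Variables (U : finType) (m : nat) (A : 'I_m -> {set U}).

Definition inA (u : U) (k : nat) : bool :=
  [exists i : 'I_m, (val i == k) && (u \in A i)].

Definition Hseq (s : seq nat) : {set U} := [set u | all (inA u) s].

Definition idx_set (s : seq nat) : {set 'I_m} := [set i : 'I_m | val i \in s].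

Definition run_decomp_seq (s : seq nat) : seq nat :=
  sort geq [seq run_len s k m.+1 | k <- s & run_start s k].

Lemma inA_lt u k : inA u k -> k < m.
Proof. by case/existsP=> i /andP[/eqP <- _]; apply: ltn_ord. Qed.

Lemma inA_ord u (i : 'I_m) : inA u i = (u \in A i).
Proof.
apply/existsP/idP => [[j /andP[/eqP/val_inj -> //]] | ui].
by exists i; rewrite eqxx.
Qed.

Lemma Hseq_catC s t : Hseq (s ++ t) = Hseq (t ++ s).
Proof. by apply/setP=> u; rewrite !inE !all_cat andbC. Qed.

Lemma HI_idx_set s : all (fun k => k < m) s -> HI A (idx_set s) = Hseq s.
Proof.
move=> /allP s_lt; apply/setP=> u; rewrite /HI inE; apply/bigcapP/allP.
- move=> uH k ks; rewrite -[k]/(val (Ordinal (s_lt k ks))) inA_ord.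
  by apply: uH; rewrite inE.
- by move=> uH i; rewrite inE -inA_ord => /uH.
Qed.

Lemma natset_sorted (I : {set 'I_m}) : sorted ltn (natset I).
Proof.
rewrite /natset -[enum _](eq_filter (mem_enum _)).
rewrite -(eq_filter (mem_map val_inj _)) -filter_map.
by rewrite (sorted_filter ltn_trans) // unlock val_ord_enum iota_ltn_sorted.
Qed.

Section SortedIndexList.
Variable s : seq nat.
Hypotheses (s_sorted : sorted ltn s) (s_lt : all (fun k => k < m) s).

Lemma natset_idx_set : natset (idx_set s) = s.
Proof.
apply: (irr_sorted_eq ltn_trans ltnn) => //; first exact: natset_sorted.
move=> k; apply/mapP/idP => [[i] | ks]; first by rewrite mem_enum inE => ? ->.
by exists (Ordinal (allP s_lt k ks)); rewrite ?mem_enum ?inE.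
Qed.

Lemma run_decomp_idx_set : run_decomp (idx_set s) = run_decomp_seq s.
Proof. by rewrite /run_decomp natset_idx_set. Qed.

Lemma card_idx_set : #|idx_set s| = size s.
Proof. by rewrite cardE -(size_map val) -/(natset _) natset_idx_set. Qed.

End SortedIndexList.
End IndexLists.

Ltac case_comparison :=
  rewrite /= ?inE;
  match goal with
  | |- context [@eq_op _ ?x ?y] => case: (@eqP nat x y) => ?; try (exfalso; lia)
  | |- context [?x <= ?y] => case: (leqP x y) => ?; try (exfalso; lia)
  end.

Section RunShapes.
Variable m : nat.
Hypothesis m_ge4 : 4 <= m.

Let fuel_ge5 : m.+1 = (m - 4).+4.+1. Proof. lia. Qed.

Ltac eval_run_decomp :=
  rewrite /run_decomp_seq fuel_ge5 /run_start; repeat case_comparison.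

Lemma run_decomp_seq1 a : run_decomp_seq m [:: a] = [:: 1].
Proof. by eval_run_decomp. Qed.
Lemma run_decomp_seq2 a : run_decomp_seq m [:: a; a.+1] = [:: 2].
Proof. by eval_run_decomp. Qed.
Lemma run_decomp_seq11 a c : a.+2 <= c -> run_decomp_seq m [:: a; c] = [:: 1; 1].
Proof. by move=> ?; eval_run_decomp. Qed.
Lemma run_decomp_seq3 a : run_decomp_seq m [:: a; a.+1; a.+2] = [:: 3].
Proof. by eval_run_decomp. Qed.
Lemma run_decomp_seq21 a c : a.+3 <= c -> run_decomp_seq m [:: a; a.+1; c] = [:: 2; 1].
Proof. by move=> ?; eval_run_decomp. Qed.
Lemma run_decomp_seq12 a c : a.+2 <= c -> run_decomp_seq m [:: a; c; c.+1] = [:: 2; 1].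
Proof. by move=> ?; eval_run_decomp. Qed.
Lemma run_decomp_seq4 a : run_decomp_seq m [:: a; a.+1; a.+2; a.+3] = [:: 4].
Proof. by eval_run_decomp. Qed.
Lemma run_decomp_seq22 a c : a.+3 <= c -> run_decomp_seq m [:: a; a.+1; c; c.+1] = [:: 2; 2].
Proof. by move=> ?; eval_run_decomp. Qed.
End RunShapes.

Section Classify.
Variables (U : finType) (P : U -> nat -> bool).

Definition avoids (u : U) (lo hi : nat) : bool :=
  all (fun k => ~~ P u k) (iota lo (hi - lo)).

Lemma avoidsP u lo hi : reflect (forall k, lo <= k < hi -> ~~ P u k) (avoids u lo hi).
Proof.
apply: (iffP allP) => nohit k; first by move=> k_in; apply: nohit; rewrite mem_iota; lia.
by rewrite mem_iota => k_in; apply: nohit; lia.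
Qed.

Lemma avoids_empty u lo hi : hi <= lo -> avoids u lo hi.
Proof. by move=> ?; apply/avoidsP => k; lia. Qed.

Lemma avoidsSl u lo hi : lo < hi -> avoids u lo hi = ~~ P u lo && avoids u lo.+1 hi.
Proof. by move=> ?; rewrite /avoids (_ : hi - lo = (hi - lo.+1).+1) //; lia. Qed.

Lemma avoidsSr u lo hi : lo <= hi -> avoids u lo hi.+1 = avoids u lo hi && ~~ P u hi.
Proof.
move=> ?; rewrite /avoids (_ : hi.+1 - lo = (hi - lo) + 1); last by lia.
by rewrite iotaD all_cat /= (_ : lo + (hi - lo) = hi) ?andbT //; lia.
Qed.

Lemma card_splitP (Q : {set U}) (p : pred U) :
  #|[set u in Q | ~~ p u]| + #|[set u in Q | p u]| = #|Q|.
Proof.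
rewrite addnC -(cardsID [set u | p u] Q); congr (_ + _); apply: eq_card => u;
by rewrite !inE andbC.
Qed.

Lemma card_neither (Q : {set U}) (p q : pred U) :
  #|[set u in Q | ~~ p u && ~~ q u]| + #|[set u in Q | p u]| + #|[set u in Q | q u]| =
  #|Q| + #|[set u in Q | p u && q u]|.
Proof.
set Qp := [set u in Q | p u]; set Qq := [set u in Q | q u].
have -> : [set u in Q | p u && q u] = Qp :&: Qq.
  by apply/setP => u; rewrite !inE andbACA andbb.
rewrite -addnA -(cardsUI Qp Qq) addnA -(card_splitP Q (fun u => p u || q u)); congr (_ + _ + _).
- by apply: eq_card => u; rewrite !inE negb_or.
- by apply: eq_card => u; rewrite !inE -andb_orr.
Qed.

Lemma card_by_last_hit (Q : {set U}) hi :
  #|Q| = #|[set u in Q | avoids u 0 hi]| +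
         \sum_(0 <= j < hi) #|[set u in Q | P u j && avoids u j.+1 hi]|.
Proof.
suff from_t t : t <= hi -> #|[set u in Q | avoids u t hi]| =
    #|[set u in Q | avoids u 0 hi]| + \sum_(0 <= j < t) #|[set u in Q | P u j && avoids u j.+1 hi]|.
  rewrite -from_t //; apply: eq_card => u; by rewrite inE avoids_empty ?andbT.
elim: t => [|t IHt] t_le; first by rewrite big_geq // addn0.
rewrite big_nat_recr //= addnA -IHt 1?ltnW // -[LHS](card_splitP _ (P^~ t)).
by congr (_ + _); apply: eq_card => u; rewrite !inE ?(avoidsSl _ t_le); case: (P u t);
  rewrite ?andbT ?andbF.
Qed.

Lemma card_by_first_hit (Q : {set U}) lo t : lo <= t ->
  #|Q| = #|[set u in Q | avoids u lo t]| +
         \sum_(lo <= k < t) #|[set u in Q | P u k && avoids u lo k]|.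
Proof.
elim: t => [|t IHt] lo_le.
  by rewrite big_geq // addn0; apply: eq_card => u; rewrite inE avoids_empty ?andbT.
have [lo_eq | lo_le_t] := eqVneq lo t.+1.
  by rewrite lo_eq big_geq // addn0; apply: eq_card => u; rewrite inE avoids_empty ?andbT.
have {}lo_le_t : lo <= t by lia.
rewrite big_nat_recr //= addnA [in LHS]IHt // [RHS]addnAC; congr (_ + _).
rewrite -(card_splitP [set u in Q | avoids u lo t] (P^~ t)); congr (_ + _);
by apply: eq_card => u; rewrite !inE ?(avoidsSr _ lo_le_t); case: (P u t);
  rewrite ?andbT ?andbF.
Qed.

End Classify.

Arguments avoids_empty {U P u lo hi}.
Arguments avoidsSl {U P u lo hi}.
Arguments avoidsSr {U P u lo hi}.

Lemma sum_nat_eventually_const (f : nat -> nat) lo s n : lo <= s <= n ->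
  (forall k, s <= k < n -> f k = f s) ->
  \sum_(lo <= k < n) f k = \sum_(lo <= k < s) f k + (n - s) * f s.
Proof.
move=> /andP[lo_le s_le] f_const; rewrite (big_cat_nat lo_le s_le) /=.
by rewrite (eq_big_nat _ _ f_const) sum_nat_const_nat.
Qed.

Section CountAlgebra.
Local Open Scope ring_scope.
Variables (R : comPzRingType) (m h1 h2 h11 h3 h21 h4 h22 g2 g3 g4 : R).
Variables (first5 first56 next5_7 next5_8 next5_9 next56_7 next56_8 next56_9 : R).
Variables (single5 pair56 n c2 c3 : R).
Hypotheses (g2E : g2 = h11 - h3) (g3E : g3 = h11 + h4 - 2 * h21)
  (g4E : g4 = h11 + h22 - 2 * h21).
Hypotheses (first5E : first5 = h1 - h2 - g2 - g3 - 2 * g4)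
  (first56E : first56 = h2 + h4 + 3 * h22 - h3 - 4 * h21)
  (next5_7E : next5_7 = g2 + h4 - h21) (next5_8E : next5_8 = g3 + h22 - h21)
  (next5_9E : next5_9 = g4 + h22 - h21)
  (next56_7E : next56_7 = h3 - h4) (next56_8E : next56_8 = h21 - h4)
  (next56_9E : next56_9 = h21 - h22).
Hypotheses (single5E : single5 = first5 - first56 - next5_7 - next5_8 - (m - 9) * next5_9)
  (pair56E : pair56 = first56 - next56_7 - next56_8 - (m - 9) * next56_9).
(* [c2] and [c3] stand for 'C(m, 2) and 'C(m - 3, 2). *)
Hypotheses (nE : n = m * h1 - (m - 1) * h2 - (m - 2) * g2 - (m - 3) * g3 - c3 * g4)
  (c2E : c2 + c3 = m * m - 4 * m + 6).

Lemma single5_add_pair56 :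
  single5 + pair56 + h21 = h1 - h2 - g2 - g3 - (m - 5) * g4 + h22.
Proof.
rewrite single5E pair56E first5E first56E next5_7E next5_8E next5_9E.
by rewrite next56_7E next56_8E next56_9E g2E g3E g4E; ring.
Qed.

Lemma count_identity : n + (m + 1) * g4 =
  m * single5 + (m + 1) * pair56 + c2 * g4 + 2 * m * (h21 - 2 * h22) + (2 * m + 1) * h22.
Proof.
have -> : c2 = m * m - 4 * m + 6 - c3 by rewrite -c2E; ring.
rewrite nE single5E pair56E first5E first56E next5_7E next5_8E next5_9E.
by rewrite next56_7E next56_8E next56_9E g2E g3E g4E; ring.
Qed.

End CountAlgebra.

Lemma double_bin2 n : 2 * 'C(n, 2) = n * n.-1.
Proof.
rewrite bin2 mul2n halfK oddM; case: n => //= n.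
by rewrite andNb subn0.
Qed.

Lemma representable_of_count_identity m n s1 s2 w q y : 2 <= m -> n < m * (m - 2) ->
  n + m.+1 * w = m * s1 + m.+1 * s2 + 'C(m, 2) * w + 2 * m * q + (2 * m).+1 * y ->
  w <= s1 + s2 + q + y ->
  exists a b c d, n = a * m + b * m.+1 + c * 'C(m, 2) + d * ((m.+1 * (m - 2)) %/ 2).
Proof.
move=> m_ge n_lt n_eq w_le.
have [d C_eq] : exists d, 'C(m, 2) = d.+1 by exists 'C(m, 2).-1; rewrite prednK ?bin_gt0.
have C_double := double_bin2 m; rewrite C_eq in n_eq C_double *.
have [k m_eq] : exists k, m = k.+2 by exists (m - 2); lia.
rewrite m_eq !subSS subn0 /= in n_lt C_double *; rewrite m_eq in n_eq w_le.
rewrite (_ : k.+3 * k = d * 2) ?mulnK //; last by lia.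
have [w_ge2 | w_lt2] := leqP 2 w.
  have : k.+2 * w <= k.+2 * (s1 + s2 + q + y) by rewrite leq_mul2l w_le.
  have : d * 2 <= d * w by rewrite leq_mul2l w_ge2 orbT.
  lia.
case: w w_lt2 n_eq w_le => [|[|//]] _ n_eq w_le.
  by exists (s1 + 2 * q + y), (s2 + y), 0, 0; lia.
case s2y_eq: (s2 + y) => [|b].
  have [s2_0 y_0] : s2 = 0 /\ y = 0 by lia.
  have [a s1q_eq] : exists a, s1 + 2 * q = a.+1 by exists (s1 + 2 * q).-1; lia.
  move: n_eq; rewrite s2_0 y_0 => n_eq; have := congr1 (muln k.+2) s1q_eq.
  by exists a, 0, 0, 1; lia.
have := congr1 (muln k.+3) s2y_eq.
by exists (s1 + 2 * q + y), b, 1, 0; lia.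
Qed.

Section Counting.
Variables (U : finType) (m : nat) (A : 'I_m -> {set U}).
Hypothesis harmA : harmonic A.
Hypothesis spread_free :
  forall I : {set 'I_m}, nonconsecutive I -> #|I| = 3 -> HI A I = set0.
Hypothesis m_ge10 : 10 <= m.

Local Notation inA := (inA A).
Local Notation Hseq := (Hseq A).
Local Notation avoids := (avoids inA).

Let m_ge4 : 4 <= m. Proof. lia. Qed.

Ltac index_list_bounds := rewrite /= ?andbT; repeat (apply/andP; split); lia.

Ltac case_hits := repeat match goal with
  | |- context [inA ?u ?k] => case: (inA u k)
  | |- context [avoids ?u ?lo ?hi] => case: (avoids u lo hi)
  | |- context [all (inA ?u) ?s] => case: (all (inA u) s)
  end.

Lemma card_Hseq_run_decomp s t :
  sorted ltn s -> sorted ltn t -> all (fun k => k < m) s -> all (fun k => k < m) t ->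
  run_decomp_seq m s = run_decomp_seq m t -> #|Hseq s| = #|Hseq t|.
Proof.
move=> s_sorted t_sorted s_lt t_lt eq_rd; rewrite -!HI_idx_set //; apply: harmA.
by rewrite !run_decomp_idx_set.
Qed.

(* [h_p] is the common size of the sets [H_I] whose run decomposition is the
   partition [p] (written as a word: [h21] is for the partition 2+1). *)
Definition h1 := #|Hseq [:: 0]|.
Definition h2 := #|Hseq [:: 0; 1]|.
Definition h11 := #|Hseq [:: 0; 2]|.
Definition h3 := #|Hseq [:: 0; 1; 2]|.
Definition h21 := #|Hseq [:: 0; 1; 3]|.
Definition h4 := #|Hseq [:: 0; 1; 2; 3]|.
Definition h22 := #|Hseq [:: 0; 1; 3; 4]|.

Lemma card_H1 a : a < m -> #|Hseq [:: a]| = h1.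
Proof.
by move=> ?; apply: card_Hseq_run_decomp; rewrite ?run_decomp_seq1 //; index_list_bounds.
Qed.
Lemma card_H2 a : a.+1 < m -> #|Hseq [:: a; a.+1]| = h2.
Proof.
by move=> ?; apply: card_Hseq_run_decomp; rewrite ?run_decomp_seq2 //; index_list_bounds.
Qed.
Lemma card_H11 a c : a.+2 <= c -> c < m -> #|Hseq [:: a; c]| = h11.
Proof.
by move=> ? ?; apply: card_Hseq_run_decomp; rewrite ?run_decomp_seq11 //; index_list_bounds.
Qed.
Lemma card_H3 a : a.+2 < m -> #|Hseq [:: a; a.+1; a.+2]| = h3.
Proof.
by move=> ?; apply: card_Hseq_run_decomp; rewrite ?run_decomp_seq3 //; index_list_bounds.
Qed.
Lemma card_H21 a c : a.+3 <= c -> c < m -> #|Hseq [:: a; a.+1; c]| = h21.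
Proof.
by move=> ? ?; apply: card_Hseq_run_decomp; rewrite ?run_decomp_seq21 //; index_list_bounds.
Qed.
Lemma card_H12 a c : a.+2 <= c -> c.+1 < m -> #|Hseq [:: a; c; c.+1]| = h21.
Proof.
move=> ? ?; apply: card_Hseq_run_decomp; rewrite ?run_decomp_seq12 ?run_decomp_seq21 //;
  index_list_bounds.
Qed.
Lemma card_H4 a : a.+3 < m -> #|Hseq [:: a; a.+1; a.+2; a.+3]| = h4.
Proof.
by move=> ?; apply: card_Hseq_run_decomp; rewrite ?run_decomp_seq4 //; index_list_bounds.
Qed.
Lemma card_H22 a c : a.+3 <= c -> c.+1 < m -> #|Hseq [:: a; a.+1; c; c.+1]| = h22.
Proof.
by move=> ? ?; apply: card_Hseq_run_decomp; rewrite ?run_decomp_seq22 //; index_list_bounds.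
Qed.

Lemma inA_spread_triple u i j k :
  i.+2 <= j -> j.+2 <= k -> inA u i -> inA u j -> inA u k -> False.
Proof.
move=> ij jk ui uj uk; have k_lt := inA_lt uk.
have s_sorted : sorted ltn [:: i; j; k] by index_list_bounds.
have s_lt : all (fun x => x < m) [:: i; j; k] by index_list_bounds.
have : u \in Hseq [:: i; j; k] by rewrite inE /= ui uj uk.
rewrite -HI_idx_set // spread_free ?inE ?card_idx_set // => x y.
by rewrite !inE => /or3P[] /eqP -> /or3P[] /eqP ->; lia.
Qed.

Lemma card_Hseq_spread s i j k :
  i.+2 <= j -> j.+2 <= k -> i \in s -> j \in s -> k \in s -> #|Hseq s| = 0.
Proof.
move=> ij jk i_s j_s k_s; apply/eqP; rewrite cards_eq0; apply/eqP/setP => u.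
rewrite !inE; apply/negP => /allP hits.
exact: (inA_spread_triple ij jk (hits _ i_s) (hits _ j_s) (hits _ k_s)).
Qed.

Lemma avoids_between u j k : j.+2 <= k -> inA u j -> inA u k.+1 ->
  avoids u j.+1 k.+1 = ~~ inA u j.+1 && ~~ inA u k.
Proof.
move=> jk uj uk; apply/avoidsP/andP => [nohit | [nj nk] x /andP[jx xk]].
  by split; apply: nohit; lia.
apply/negP => ux; have [x_eq | x_ne] := eqVneq x j.+1; first by rewrite -x_eq ux in nj.
have [x_eq' | x_ne'] := eqVneq x k; first by rewrite -x_eq' ux in nk.
by apply: (inA_spread_triple (i := j) (j := x) (k := k.+1)) => //; lia.
Qed.

Definition gap_count (S : seq nat) (j i : nat) : nat :=
  #|[set u in Hseq (S ++ [:: j; i]) | avoids u j.+1 i]|.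

Lemma gap_count_adj S j : gap_count S j j.+1 = #|Hseq (S ++ [:: j; j.+1])|.
Proof. by apply: eq_card => u; rewrite inE avoids_empty ?andbT. Qed.

Lemma gap_count2 S j :
  gap_count S j j.+2 + #|Hseq (S ++ [:: j; j.+1; j.+2])| = #|Hseq (S ++ [:: j; j.+2])|.
Proof.
rewrite -(card_splitP (Hseq (S ++ [:: j; j.+2])) (inA^~ j.+1)).
congr (_ + _); apply: eq_card => u.
  by rewrite !inE (avoidsSl (ltnSn _)) avoids_empty ?andbT.
by rewrite !inE !all_cat /=; case_hits.
Qed.

Lemma gap_count_far S j k : j.+2 <= k ->
  gap_count S j k.+1 + #|Hseq (S ++ [:: j; j.+1; k.+1])| + #|Hseq (S ++ [:: j; k; k.+1])| =
  #|Hseq (S ++ [:: j; k.+1])| + #|Hseq (S ++ [:: j; j.+1; k; k.+1])|.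
Proof.
move=> jk; set Q := Hseq (S ++ [:: j; k.+1]).
have -> : gap_count S j k.+1 = #|[set u in Q | ~~ inA u j.+1 && ~~ inA u k]|.
  apply: eq_card => u; rewrite !inE !all_cat /=.
  case uj: (inA u j); case uk: (inA u k.+1); rewrite ?andbF //=.
  by rewrite avoids_between.
have -> : #|Hseq (S ++ [:: j; j.+1; k.+1])| = #|[set u in Q | inA u j.+1]|.
  by apply: eq_card => u; rewrite !inE !all_cat /=; case_hits.
have -> : #|Hseq (S ++ [:: j; k; k.+1])| = #|[set u in Q | inA u k]|.
  by apply: eq_card => u; rewrite !inE !all_cat /=; case_hits.
have -> : #|Hseq (S ++ [:: j; j.+1; k; k.+1])| = #|[set u in Q | inA u j.+1 && inA u k]|.
  by apply: eq_card => u; rewrite !inE !all_cat /=; case_hits.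
exact: card_neither.
Qed.

Lemma gap_count_nil2 j : j.+2 < m -> gap_count [::] j j.+2 + h3 = h11.
Proof.
by move=> ?; rewrite -(card_H3 (a := j)) // -(card_H11 (a := j) (c := j.+2)) // gap_count2.
Qed.

Lemma gap_count_nil3 j : j.+3 < m -> gap_count [::] j j.+3 + 2 * h21 = h11 + h4.
Proof.
move=> ?; have := gap_count_far [::] (leqnn j.+2).
by rewrite cat0s card_H21 ?card_H12 ?card_H11 ?card_H4 //; lia.
Qed.

Lemma gap_count_nil_far j k : j.+3 <= k -> k.+1 < m ->
  gap_count [::] j k.+1 + 2 * h21 = h11 + h22.
Proof.
move=> ? ?; have := gap_count_far [::] (j := j) (k := k) ltac:(lia).
by rewrite cat0s card_H21 ?card_H12 ?card_H11 ?card_H22 //; lia.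
Qed.

Definition g2 := gap_count [::] 0 2.
Definition g3 := gap_count [::] 0 3.
Definition g4 := gap_count [::] 0 4.

Lemma g2E : g2 + h3 = h11. Proof. by apply: gap_count_nil2; lia. Qed.
Lemma g3E : g3 + 2 * h21 = h11 + h4. Proof. by apply: gap_count_nil3; lia. Qed.
Lemma g4E : g4 + 2 * h21 = h11 + h22.
Proof. by apply: (gap_count_nil_far (k := 3)); lia. Qed.

Lemma gap_count_nil2E j : j.+2 < m -> gap_count [::] j j.+2 = g2.
Proof. by move=> j_lt; have := gap_count_nil2 j_lt; have := g2E; lia. Qed.

Lemma gap_count_nil3E j : j.+3 < m -> gap_count [::] j j.+3 = g3.
Proof. by move=> j_lt; have := gap_count_nil3 j_lt; have := g3E; lia. Qed.

Lemma gap_count_nil_farE j k : j.+4 <= k -> k < m -> gap_count [::] j k = g4.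
Proof.
case: k => // k jk k_lt; have := gap_count_nil_far (j := j) (k := k) jk k_lt.
by have := g4E; lia.
Qed.

Definition first_count t := #|[set u in Hseq [:: t] | avoids u 0 t]|.

Definition pred_count t := \sum_(0 <= j < t) gap_count [::] j t.

Lemma first_count_pred t : t < m -> first_count t + pred_count t = h1.
Proof.
move=> t_lt; rewrite -(card_H1 t_lt) (card_by_last_hit inA _ t); congr (_ + _).
by apply: eq_bigr => j _; apply: eq_card => u; rewrite !inE /=; case_hits.
Qed.

Lemma pred_count_ge3 t : 3 <= t -> t < m -> pred_count t = h2 + g2 + g3 + (t - 3) * g4.
Proof.
move=> t_ge t_lt; have [k t_eq] : exists k, t = k.+3 by exists (t - 3); lia.
rewrite {}t_eq !subSS subn0 in t_lt *.
rewrite /pred_count (big_cat_nat (n := k)) //=; last by lia.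
rewrite !big_nat_recl; try lia.
rewrite [\sum_(k <= i < k) _]big_geq //.
rewrite gap_count_nil3E ?gap_count_nil2E ?gap_count_adj ?cat0s ?card_H2 //; try lia.
rewrite (eq_big_nat _ _ (F2 := fun => g4)) ?sum_nat_const_nat ?subn0; first lia.
by move=> j j_lt; apply: gap_count_nil_farE; lia.
Qed.

Lemma sum_pred_count : \sum_(0 <= t < m) pred_count t =
  (m - 1) * h2 + (m - 2) * g2 + (m - 3) * g3 + 'C(m - 3, 2) * g4.
Proof.
rewrite (big_cat_nat (n := 3)) //=; last by lia.
have -> : \sum_(0 <= t < 3) pred_count t = h2 + (g2 + h2).
  rewrite /pred_count /index_iota /= !big_cons !big_nil.
  by rewrite gap_count_nil2E ?gap_count_adj ?cat0s ?card_H2; lia.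
rewrite [\sum_(3 <= t < m) _](eq_big_nat _ _ (F2 := fun t => h2 + g2 + g3 + (t - 3) * g4));
  last by move=> t /andP[t_ge t_lt]; apply: pred_count_ge3.
rewrite big_split /= sum_nat_const_nat -big_distrl /=.
have -> : \sum_(3 <= t < m) (t - 3) = 'C(m - 3, 2).
  by rewrite -bin2_sum -{1}(add0n 3) big_addn; apply: eq_bigr => t _; rewrite addnK.
have [k m_eq] : exists k, m = k.+3 by exists (m - 3); lia.
by rewrite m_eq !subSS !subn0; lia.
Qed.

Lemma card_U_first : complete A -> #|U| = \sum_(0 <= t < m) first_count t.
Proof.
move=> covA; rewrite -cardsT (card_by_first_hit inA _ (leq0n m)).
have -> : #|[set u in [set: U] | avoids u 0 m]| = 0.
  apply: eq_card0 => u; rewrite !inE; apply/negP => /avoidsP nohit.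
  have : u \in \bigcup_(i < m) A i by rewrite covA inE.
  by case/bigcupP => i _ ui; move: (nohit i); rewrite inA_ord ui ltn_ord => /(_ isT).
by rewrite add0n; apply: eq_bigr => t _; apply: eq_card => u; rewrite !inE /=; case_hits.
Qed.

Lemma card_U_eq : complete A ->
  #|U| + ((m - 1) * h2 + (m - 2) * g2 + (m - 3) * g3 + 'C(m - 3, 2) * g4) = m * h1.
Proof.
move=> covA; rewrite card_U_first // -sum_pred_count -big_split /=.
rewrite (eq_big_nat _ _ (F2 := fun => h1)) ?sum_nat_const_nat ?subn0 //.
by move=> t /andP[_ t_lt]; apply: first_count_pred.
Qed.

Lemma avoids_below u i j k : i < j -> j.+2 <= k -> inA u j -> inA u k -> avoids u 0 i.
Proof.
move=> ij jk uj uk; apply/avoidsP => x /andP[_ xi]; apply/negP => ux.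
by apply: (inA_spread_triple (i := x) (j := j) (k := k)) => //; lia.
Qed.

Lemma avoids_before u j k : j.+3 <= k -> inA u j.+1 -> inA u k ->
  avoids u 0 j.+1 = ~~ inA u j.
Proof.
by move=> jk uj uk; rewrite (avoidsSr (leq0n j)) (avoids_below (j := j.+1) (k := k)).
Qed.

(* A trace with least index 5 that also contains some k >= 7 can meet [0, 5)
   only in 4 ([avoids_before]); this makes the counts below computable. *)
Definition single5_count := #|[set u in Hseq [:: 5] | avoids u 0 5 && avoids u 6 m]|.
Definition pair56_count := #|[set u in Hseq [:: 5; 6] | avoids u 0 5 && avoids u 7 m]|.
Definition first56_count := #|[set u in Hseq [:: 5; 6] | avoids u 0 5]|.
Definition next5_count k :=
  #|[set u in Hseq [:: 5] | avoids u 0 5 && (inA u k && avoids u 6 k)]|.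
Definition next56_count k :=
  #|[set u in Hseq [:: 5; 6] | avoids u 0 5 && (inA u k && avoids u 7 k)]|.

Lemma first_count5_split : first_count 5 = single5_count + \sum_(6 <= k < m) next5_count k.
Proof.
rewrite /first_count /single5_count (@card_by_first_hit _ inA _ 6 m); last by lia.
congr (_ + _); first by apply: eq_card => u; rewrite !inE andbA.
by apply: eq_bigr => k _; apply: eq_card => u; rewrite !inE; case_hits.
Qed.

Lemma next5_count6 : next5_count 6 = first56_count.
Proof.
by apply: eq_card => u; rewrite !inE (avoids_empty (leqnn 6)) /=; case_hits.
Qed.

Lemma next5_count_gap k : 7 <= k ->
  next5_count k + gap_count [:: 4] 5 k = gap_count [::] 5 k.
Proof.
move=> k_ge; rewrite /next5_count /gap_count -[RHS](card_splitP _ (inA^~ 4)); congr (_ + _);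
  apply: eq_card => u; rewrite !inE /=.
  case u5: (inA u 5); case uk: (inA u k); rewrite ?andbF //=.
  by rewrite (avoids_before (j := 4) (k := k)) //; case_hits.
by case_hits.
Qed.

Lemma next5_count7 : next5_count 7 + h21 = g2 + h4.
Proof.
have := next5_count_gap (leqnn 7); have := gap_count2 [:: 4] 5.
by rewrite gap_count_nil2E ?card_H4 ?card_H21 //; lia.
Qed.

Lemma gap_count4_far k : 7 <= k -> k.+1 < m -> gap_count [:: 4] 5 k.+1 + h22 = h21.
Proof.
move=> k_ge k_lt; have := gap_count_far [:: 4] (j := 5) (k := k) k_ge.
rewrite card_H22 ?card_H21 //; try lia.
by rewrite !(card_Hseq_spread (i := 4) (j := 6) (k := k.+1)) ?inE ?eqxx ?orbT //; lia.
Qed.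

Lemma next5_count_far k : 9 <= k -> k < m -> next5_count k + h21 = g4 + h22.
Proof.
case: k => // k k_ge k_lt; have := next5_count_gap (k := k.+1) ltac:(lia).
by have := gap_count4_far (ltnW k_ge) k_lt; rewrite gap_count_nil_farE //; lia.
Qed.

Lemma next5_count8 : next5_count 8 + h21 = g3 + h22.
Proof.
have := next5_count_gap (isT : 7 <= 8); have := gap_count4_far (leqnn 7).
by rewrite gap_count_nil3E //; lia.
Qed.

Lemma first_count5_decomp : first_count 5 =
  single5_count + first56_count + next5_count 7 + next5_count 8 + (m - 9) * next5_count 9.
Proof.
rewrite first_count5_split (sum_nat_eventually_const (s := 9)); last 2 first.
- by apply/andP; split; lia.
- move=> k /andP[k_ge k_lt]; have := next5_count_far k_ge k_lt.
  by have := next5_count_far (leqnn 9) ltac:(lia); lia.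
by rewrite /index_iota /= !big_cons big_nil next5_count6 addn0 !addnA.
Qed.

Lemma first56_count_val : first56_count + h3 + 4 * h21 = h2 + h4 + 3 * h22.
Proof.
have gap6_far j : j <= 2 -> gap_count [:: 6] j 5 + h22 = h21.
  move=> j_le; have := gap_count_far [:: 6] (j := j) (k := 4) ltac:(lia).
  rewrite !(Hseq_catC A [:: 6]) /= card_H22 ?card_H12 //; try lia.
  by rewrite !(card_Hseq_spread (i := j) (j := 4) (k := 6)) ?inE ?eqxx ?orbT //; lia.
have gap6_3 : gap_count [:: 6] 3 5 + h4 = h21.
  have := gap_count2 [:: 6] 3.
  by rewrite !(Hseq_catC A [:: 6]) /= card_H4 ?card_H12 //; lia.
have gap6_4 : gap_count [:: 6] 4 5 = h3.
  by rewrite gap_count_adj Hseq_catC /= card_H3 //; lia.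
have summand j :
    #|[set u in Hseq [:: 5; 6] | inA u j && avoids u j.+1 5]| = gap_count [:: 6] j 5.
  by apply: eq_card => u; rewrite !inE /=; case_hits.
have := card_by_last_hit inA (Hseq [:: 5; 6]) 5.
rewrite /index_iota /= !big_cons big_nil !summand gap6_4 card_H2; last by lia.
have := gap6_far 0 isT; have := gap6_far 1 isT; have := gap6_far 2 isT.
by rewrite /first56_count; lia.
Qed.

Lemma first56_count_split : first56_count = pair56_count + \sum_(7 <= k < m) next56_count k.
Proof.
rewrite /first56_count /pair56_count (@card_by_first_hit _ inA _ 7 m); last by lia.
congr (_ + _); first by apply: eq_card => u; rewrite !inE andbA.
by apply: eq_bigr => k _; apply: eq_card => u; rewrite !inE; case_hits.
Qed.

Lemma next56_count7 : next56_count 7 + h4 = h3.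
Proof.
rewrite -(card_H3 (a := 5) ltac:(lia)) -(card_H4 (a := 4) ltac:(lia)).
rewrite /next56_count -(card_splitP (Hseq [:: 5; 6; 7]) (inA^~ 4)).
congr (_ + _); apply: eq_card => u; rewrite !inE ?(avoids_empty (leqnn 7)) /=.
  case u5: (inA u 5); case u7: (inA u 7); rewrite ?andbF //=.
  by rewrite (avoids_before (j := 4) (k := 7)) //; case_hits.
by case_hits.
Qed.

Lemma next56_count_gap k : 8 <= k -> next56_count k = gap_count [:: 5] 6 k.
Proof.
move=> k_ge; apply: eq_card => u; rewrite !inE /=.
case u6: (inA u 6); case uk: (inA u k); rewrite ?andbF //=.
by rewrite (avoids_below (j := 6) (k := k)) //; case_hits.
Qed.

Lemma next56_count8 : next56_count 8 + h4 = h21.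
Proof.
rewrite next56_count_gap //; have := gap_count2 [:: 5] 6.
by rewrite card_H4 ?card_H21 //; lia.
Qed.

Lemma next56_count_far k : 9 <= k -> k < m -> next56_count k + h22 = h21.
Proof.
case: k => // k k_ge k_lt; rewrite next56_count_gap; last by lia.
have := gap_count_far [:: 5] (j := 6) (k := k) ltac:(lia).
rewrite card_H22 ?card_H21 //; try lia.
by rewrite !(card_Hseq_spread (i := 5) (j := 7) (k := k.+1)) ?inE ?eqxx ?orbT //; lia.
Qed.

Lemma first56_count_decomp : first56_count =
  pair56_count + next56_count 7 + next56_count 8 + (m - 9) * next56_count 9.
Proof.
rewrite first56_count_split (sum_nat_eventually_const (s := 9)); last 2 first.
- by apply/andP; split; lia.
- move=> k /andP[k_ge k_lt]; have := next56_count_far k_ge k_lt.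
  by have := next56_count_far (leqnn 9) ltac:(lia); lia.
by rewrite /index_iota /= !big_cons big_nil addn0 !addnA.
Qed.

Lemma h22_double_le : 2 * h22 <= h21.
Proof.
rewrite mul2n -addnn -{1}(card_H22 (a := 0) (c := 4) isT ltac:(lia)).
rewrite -(card_H22 (a := 0) (c := 5) isT ltac:(lia)).
rewrite -(card_H21 (a := 0) (c := 5) isT ltac:(lia)).
have disjoint : Hseq [:: 0; 1; 4; 5] :&: Hseq [:: 0; 1; 5; 6] = set0.
  apply/setP => u; rewrite !inE /=; apply/negbTE/negP.
  move=> /andP[/and4P[_ u1 u4 _] /and4P[_ _ _ /andP[u6 _]]].
  exact: (inA_spread_triple (i := 1) (j := 4) (k := 6) isT isT u1 u4 u6).
have := cardsU (Hseq [:: 0; 1; 4; 5]) (Hseq [:: 0; 1; 5; 6]).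
rewrite disjoint cards0 subn0 => <-.
apply: subset_leq_card; apply/subsetP => u; rewrite !inE /= => /orP[].
- by case/and4P => -> -> _ /andP[-> _].
- by case/and4P => -> -> -> _.
Qed.

Lemma count_relations : complete A ->
  #|U| + m.+1 * g4 = m * single5_count + m.+1 * pair56_count + 'C(m, 2) * g4 +
                     2 * m * (h21 - 2 * h22) + (2 * m).+1 * h22 /\
  g4 <= single5_count + pair56_count + (h21 - 2 * h22) + h22.
Proof.
move=> covA; move: (h21 - 2 * h22) (subnK h22_double_le) => q q_eq.
have := card_U_eq covA; have := double_bin2 m; have := double_bin2 (m - 3).
have := first_count_pred (t := 5) ltac:(lia); have := pred_count_ge3 (t := 5) isT ltac:(lia).
have := first_count_pred (t := m.-1) ltac:(lia).
have := pred_count_ge3 (t := m.-1) ltac:(lia) ltac:(lia).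
have := first_count5_decomp; have := next5_count7; have := next5_count8.
have := next5_count_far (k := 9) isT ltac:(lia).
have := first56_count_val; have := first56_count_decomp; have := next56_count7.
have := next56_count8; have := next56_count_far (k := 9) isT ltac:(lia).
have := g2E; have := g3E; have := g4E; move=> *; split.
  suff : (#|U|%:Z + (m%:Z + 1) * g4%:Z =
          m%:Z * single5_count%:Z + (m%:Z + 1) * pair56_count%:Z + 'C(m, 2)%:Z * g4%:Z +
          2 * m%:Z * q%:Z + (2 * m%:Z + 1) * h22%:Z)%R by lia.
  have -> : (q%:Z = h21%:Z - 2 * h22%:Z)%R by lia.
  apply: (count_identity (h1 := Posz h1) (h2 := Posz h2) (h11 := Posz h11) (h3 := Posz h3)
    (h4 := Posz h4) (g2 := Posz g2) (g3 := Posz g3) (c3 := Posz 'C(m - 3, 2))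
    (first5 := Posz (first_count 5)) (first56 := Posz first56_count)
    (next5_7 := Posz (next5_count 7)) (next5_8 := Posz (next5_count 8))
    (next5_9 := Posz (next5_count 9)) (next56_7 := Posz (next56_count 7))
    (next56_8 := Posz (next56_count 8)) (next56_9 := Posz (next56_count 9))); lia.
suff : (single5_count%:Z + pair56_count%:Z + h21%:Z =
        h1%:Z - h2%:Z - g2%:Z - g3%:Z - (m%:Z - 5) * g4%:Z + h22%:Z)%R by lia.
apply: (single5_add_pair56 (h11 := Posz h11) (h3 := Posz h3) (h4 := Posz h4)
  (first5 := Posz (first_count 5)) (first56 := Posz first56_count)
  (next5_7 := Posz (next5_count 7)) (next5_8 := Posz (next5_count 8))
  (next5_9 := Posz (next5_count 9)) (next56_7 := Posz (next56_count 7))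
  (next56_8 := Posz (next56_count 8)) (next56_9 := Posz (next56_count 9))); lia.
Qed.

End Counting.

Theorem lemma4p26 (U : finType) (m : nat) (A : 'I_m -> {set U}) :
  complete A -> harmonic A ->
  #|U| < m * (m - 2) -> 51 <= m ->
  (forall I : {set 'I_m}, nonconsecutive I -> #|I| = 3 -> HI A I = set0) ->
  exists a b c d : nat,
    #|U| = a * m + b * m.+1 + c * 'C(m, 2) + d * ((m.+1 * (m - 2)) %/ 2).
Proof.
move=> covA harmA n_lt m_ge spread_free.
have [n_eq g4_le] := count_relations harmA spread_free ltac:(lia) covA.
by apply: (representable_of_count_identity _ n_lt n_eq g4_le); lia.
Qed.
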